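(* Let $k$ be an algebraically closed field of characteristic exponent $p$, let $q\ne p$ be an odd prime, let $E$ be an extraspecial group of order $q^{1+2a}$, $a\ge 1$, and let $\psi:E\to GL_d(k)$ be a faithful irreducible representation. Then $|\mathrm{Aut}\,E|\le 2d^{2\log_3 d+3}$.
   Context: The characteristic exponent $p$ is $\operatorname{char}k$ if positive, else $1$. *)

From Stdlib Require Import Reals.
From mathcomp Require Import all_boot all_order all_algebra all_fingroup all_solvable all_character.

(* The real number 2 * d ^ (2 * log_3 d + 3), in Stdlib's reals R
   (Rpower x y = exp (y * ln x); log_3 d = ln d / ln 3). *)
Definition aut_bound (d : nat) : R :=
  Rmult (INR 2) (Rpower (INR d)
    (Rplus (Rmult (INR 2) (Rdiv (ln (INR d)) (ln (INR 3)))) (INR 3))).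

Local Open Scope ring_scope.

Definition char_exponent (F : fieldType) (p : nat) : Prop :=
  (p \in [pchar F]) \/ ((forall r : nat, r \notin [pchar F]) /\ p = 1%N).

(* The representation has degree d = q^a, since q is invertible in k.  For
   Z(E) <= U <= E with |E : U| = q^k, an automorphism fixing U pointwise moves
   h in E only within the coset h C_E(U), of size q^(k+1), because it fixes
   the central commutators [h, u]; if it also fixes h it fixes <U, h>.  By
   induction the pointwise stabiliser of U has order at most q^(k(k+3)/2).
   As Aut E permutes the q - 1 generators of Z(E) and the stabiliser of one
   fixes Z(E), |Aut E| <= (q - 1) q^(a(2a+3)); finally log_3 q >= 1 turns this
   into 2 d^(2 log_3 d + 3). *)

From Stdlib Require Import Reals Lra.
From mathcomp Require Import all_boot all_order all_algebra all_fingroup all_solvable all_character.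
From mathcomp Require Import zify.
Set Implicit Arguments. Unset Strict Implicit. Unset Printing Implicit Defensive.

Section AutomorphismStabilizers.
Local Open Scope group_scope.
Variables (gT : finGroupType) (E : {group gT}).

Lemma autR (a : {perm gT}) x y :
  a \in Aut E -> x \in E -> y \in E -> a [~ x, y] = [~ a x, a y].
Proof. by move=> Aa Ex Ey; rewrite -(autmE Aa) morphR. Qed.

Lemma astab_Aut : 'C(E | [Aut E]) = 1.
Proof.
apply/trivgP/subsetP => a CEa; apply/set1P.
apply: (eq_Aut (astab_dom CEa) (group1 _)) => x Ex.
by rewrite perm1; apply: (astab_act CEa).
Qed.

Lemma astab_joing_cycle (U : {group gT}) h : U \subset E -> h \in E ->
  'C_('C(U | [Aut E]))[h | [Aut E]] = 'C(U <*> <[h]> | [Aut E]).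
Proof.
move=> sUE Eh; rewrite astab_gen ?subUset ?sUE ?cycle_subG // astabU.
by rewrite astab_gen ?sub1set.
Qed.

Hypothesis cEE : [~: E, E] \subset 'Z(E).

Lemma orbit_astab_sub_lcoset (U : {group gT}) h :
  'Z(E) \subset U -> U \subset E -> h \in E ->
  orbit [Aut E] 'C(U | [Aut E]) h \subset h *: 'C_E(U).
Proof.
move=> sZU sUE Eh; apply/subsetP => _ /imsetP[a CUa ->] /=.
have Aa := astab_dom CUa.
have fixU u : u \in U -> a u = u by apply: (astab_act CUa).
have Eah : a h \in E by apply: Aut_closed.
set k := h^-1 * a h; have ahk : a h = h * k by rewrite /k mulKVg.
rewrite mem_lcoset -/k inE groupM ?groupV //=; apply/centP => u Uu.
have Eu : u \in E by apply: (subsetP sUE).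
have Zhu : [~ h, u] \in 'Z(E) by apply: (subsetP cEE); apply: mem_commg.
have : a [~ h, u] = [~ h, u] by apply: fixU; apply: (subsetP sZU).
rewrite autR // (fixU u Uu) ahk commMgJ.
have /centP cZ := subsetP (subsetIr E 'C(E)) _ Zhu.
have Ek : k \in E by rewrite groupM ?groupV.
have -> : [~ h, u] ^ k = [~ h, u].
  by apply/conjg_fixP/commgP; apply: (cZ k Ek).
by move/(canRL (mulKg _)); rewrite mulVg => /eqP/commgP.
Qed.

End AutomorphismStabilizers.

Section ExtraspecialAut.
Local Open Scope group_scope.
Variables (q : nat) (gT : finGroupType) (E : {group gT}).
Hypotheses (qE : q.-group E) (esE : extraspecial E).

Let q_gt1 : (1 < q)%N := prime_gt1 (extraspecial_prime qE esE).

Lemma card_astab_extraspecial k (U : {group gT}) :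
  'Z(E) \subset U -> U \subset E -> #|E : U| = (q ^ k)%N ->
  (#|'C(U | [Aut E])| <= q ^ 'C(k.+2, 2).-1)%N.
Proof.
have cEE : [~: E, E] \subset 'Z(E) by have [[_ <-]] := esE; rewrite derg1.
elim/ltn_ind: k U => k IHk U sZU sUE iU.
have [defU | ltUE] := eqVproper sUE.
  by rewrite -(group_inj defU) astab_Aut cards1 expn_gt0 ltnW.
have [_ [h Eh notUh]] := properP ltUE.
pose V := (U <*> <[h]>)%G.
have sUV : U \subset V := joing_subl U <[h]>.
have sVE : V \subset E by rewrite join_subG sUE cycle_subG.
have [k' iV] : {k' | #|E : V| = (q ^ k')%N}.
  exact: p_natP (pnat_dvd (dvdn_indexg E V) qE).
have ltk'k : (k' < k)%N.
  have iVU : (1 < #|V : U|)%N.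
    rewrite indexg_gt1; apply: contra notUh => /subsetP; apply.
    by rewrite mem_gen // inE cycle_id orbT.
  rewrite -(ltn_exp2l _ _ q_gt1) -iV -iU -(Lagrange_index sVE sUV).
  by rewrite ltn_Pmulr // indexg_gt0.
case: k ltk'k IHk iU => // k ltk'k IHk iU.
have sCAut : 'C(U | [Aut E]) \subset Aut E by apply/subsetP => a /astab_dom.
rewrite -(card_orbit_in_stab [Aut E] h sCAut) astab_joing_cycle //.
have orbit_le : (#|orbit [Aut E] 'C(U | [Aut E]) h| <= q ^ k.+2)%N.
  apply: leq_trans (subset_leq_card (orbit_astab_sub_lcoset cEE sZU sUE Eh)) _.
  rewrite card_lcoset (card_subcent_extraspecial qE esE sUE) (setIidPl sZU).
  by rewrite (card_center_extraspecial qE esE) iU -expnS.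
have stab_le : (#|'C(V | [Aut E])| <= q ^ 'C(k.+2, 2).-1)%N.
  apply: leq_trans (IHk k' ltk'k V (subset_trans sZU sUV) sVE iV) _.
  rewrite leq_exp2l //; have := @leq_bin2l k'.+2 k.+2 2; lia.
apply: leq_trans (leq_mul orbit_le stab_le) _.
rewrite -expnD leq_exp2l // [in leqRHS]binS bin1.
have : 0 < 'C(k.+2, 2) by rewrite bin_gt0.
lia.
Qed.

Lemma card_Aut_extraspecial k : #|E : 'Z(E)| = (q ^ k)%N ->
  (#|Aut E| <= q.-1 * q ^ 'C(k.+2, 2).-1)%N.
Proof.
move=> iZ; have oZ := card_center_extraspecial qE esE.
have oZ1 : #|'Z(E)^#| = q.-1.
  by move: (cardsD1 1 'Z(E)); rewrite group1 oZ add1n => ->.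
have [z Zz] : exists z, z \in 'Z(E)^#.
  by apply/set0Pn; rewrite -card_gt0 oZ1 -ltnS prednK // ltnW.
rewrite -(card_orbit_in_stab [Aut E] z (subxx _)) astabIdom.
apply: leq_mul.
  rewrite -oZ1 subset_leq_card // acts_sub_orbit // /= astabsD1.
  exact: acts_char (subxx _) (center_char E).
have defZ : 'Z(E) :=: <[z]>.
  by apply: nt_gen_prime; rewrite ?oZ ?(extraspecial_prime qE esE).
have -> : 'C[z | [Aut E]] = 'C('Z(E) | [Aut E]).
  by rewrite defZ astab_gen // sub1set; case/setD1P: Zz => _ /(subsetP (center_sub E)).
exact: card_astab_extraspecial (subxx _) (center_sub E) iZ.
Qed.
End ExtraspecialAut.

Lemma char_exponent_pcharN (F : fieldType) p q :
  char_exponent F p -> q <> p -> q \notin [pchar F]%R.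
Proof.
case=> [pF | [nF _]] // qp.
by rewrite (GRing.pcharf_eq pF) inE; apply/eqP.
Qed.

Section ExtraspecialRepresentation.
Local Open Scope group_scope.

Lemma faithful_irr_extraspecial_degree (F : closedFieldType) (q a d : nat)
    (gT : finGroupType) (E : {group gT}) (rE : mx_representation F E d) :
  prime q -> q \notin [pchar F]%R -> extraspecial E -> #|E| = (q ^ a.*2.+1)%N ->
  mx_faithful rE -> mx_irreducible rE -> d = (q ^ a)%N.
Proof.
move=> q_pr q'F esE oE ffulE irrE.
have qE : q.-group E by rewrite /pgroup oE pnatX (pnat_id q_pr).
have F'E : ([pchar F]%R)^'.-group E by apply: sub_pgroup qE => r /eqP ->.
have ffulE1 : rstab rE 1%:M == 1 by rewrite eqEsubset sub1G andbT.
have [rk _] := faithful_repr_extraspecial_pchar qE esE oE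
  (@group_closure_closed_field F gT E) F'E irrE ffulE1.
by rewrite mxrank1 in rk.
Qed.

End ExtraspecialRepresentation.

Lemma bin2_double_pred a : 'C((2 * a).+2, 2).-1 = (a * (2 * a + 3))%N.
Proof.
rewrite bin2 -pred_Sn.
have -> : ((2 * a).+2 * (2 * a).+1)%N = (a.+1 * (2 * a).+1).*2.
  by rewrite -mul2n; lia.
rewrite doubleK; lia.
Qed.

Section AutBoundReal.
Local Open Scope R_scope.

Lemma INR_expn m n : INR (m ^ n)%N = INR m ^ n.
Proof. by elim: n => [|n IHn] //=; rewrite expnS mulnE mult_INR IHn. Qed.

Lemma Rlog3_ge1 x : 3 <= x -> 1 <= Rlog 3 x.
Proof.
move=> x3; have ln3_gt0 : 0 < ln 3 by rewrite -ln_1; apply: ln_increasing; lra.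
have [lt3x | <-] := Rle_lt_or_eq_dec _ _ x3; last by rewrite /Rlog Rdiv_diag; lra.
have := ln_increasing 3 x; rewrite /Rlog => lt_ln.
apply: (Rmult_le_reg_r (ln 3)) => //; rewrite /Rdiv Rmult_assoc Rinv_l; lra.
Qed.

Lemma Rpower_Rlog3_pred_ge x : 3 <= x -> x / 3 <= Rpower x (Rlog 3 x - 1).
Proof.
move=> x3; have t1 := Rlog3_ge1 x3.
have <- : Rpower 3 (Rlog 3 x - 1) = x / 3.
  rewrite Rpower_plus Rpower_Ropp Rpower_1 ?Rpower_Rlog //; lra.
apply: Rle_Rpower_l; lra.
Qed.

Lemma aut_bound_expn (q a : nat) : (0 < q)%N ->
  aut_bound (q ^ a) = 2 * Rpower (INR q) (INR a * (2 * INR a * Rlog 3 (INR q) + 3)).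
Proof.
move=> q_gt0; have Q0 : 0 < INR q by apply: lt_0_INR; apply/ltP.
rewrite /aut_bound INR_expn -Rpower_pow // Rpower_mult ln_Rpower /Rlog.
have -> : INR 2 = 2 by rewrite /INR; lra.
have -> : INR 3 = 3 by rewrite /INR; lra.
congr (_ * Rpower _ _); rewrite /Rdiv; ring.
Qed.

Lemma expn_le_aut_bound (q a : nat) : (3 <= q)%N -> (1 <= a)%N ->
  INR (q.-1 * q ^ (a * (2 * a + 3))) <= aut_bound (q ^ a).
Proof.
move=> q3 a1; rewrite aut_bound_expn; last by lia.
rewrite mulnE mult_INR INR_expn.
set Q := INR q; set A := INR a; set t := Rlog 3 Q.
have Q3 : 3 <= Q by have /= := le_INR _ _ (elimT leP q3); rewrite /Q; lra.
have A1 : 1 <= A by have /= := le_INR _ _ (elimT leP a1); rewrite /A; lra.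
have t1 : 1 <= t := Rlog3_ge1 Q3.
have -> : INR q.-1 = Q - 1 by rewrite /Q -{2}(prednK (ltnW (ltnW q3))) S_INR; ring.
rewrite -Rpower_pow; last lra.
have -> : INR (a * (2 * a + 3)) = A * (2 * A + 3).
  by rewrite mulnE addnE mult_INR plus_INR mult_INR /A /=; ring.
have -> : A * (2 * A * t + 3) = A * (2 * A + 3) + (t - 1) * (2 * A * A) by ring.
rewrite Rpower_plus -(Rpower_mult Q (t - 1)).
set P := Rpower Q (A * (2 * A + 3)); set R := Rpower Q (t - 1).
have P0 : 0 < P by apply: exp_pos.
have R_ge : Q / 3 <= R := Rpower_Rlog3_pred_ge Q3.
have slack : (Q / 3) ^ 2 <= Rpower R (2 * A * A).
  apply: Rle_trans (_ : R ^ 2 <= _).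
    by apply: pow_incr; lra.
  rewrite -Rpower_pow; last lra.
  apply: Rle_Rpower; rewrite /INR; nra.
have : Q - 1 <= 2 * (Q / 3) ^ 2 by nra.
nra.
Qed.
End AutBoundReal.

Theorem corollary8p3 (k : closedFieldType) (p q a d : nat) (gT : finGroupType)
    (E : {group gT}) (psi : mx_representation k E d) :
  char_exponent k p -> prime q -> odd q -> q <> p ->
  extraspecial E -> #|E| = (q ^ (1 + 2 * a))%N -> (1 <= a)%N ->
  mx_faithful psi -> mx_irreducible psi ->
  Rle (INR #|Aut E|) (aut_bound d).
Proof.
move=> chp q_pr oq qp esE oE a1 ffulE irrE.
have qE : (q.-group E)%g by rewrite /pgroup oE pnatX (pnat_id q_pr).
have q_gt2 : (2 < q)%N.
  by rewrite ltn_neqAle prime_gt1 // andbT; apply: contraTneq oq => <-.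
have -> : d = (q ^ a)%N.
  apply: faithful_irr_extraspecial_degree q_pr _ esE _ ffulE irrE.
    exact: char_exponent_pcharN chp qp.
  by rewrite oE -muln2 add1n mulnC.
have iZ : #|E : 'Z(E)|%g = (q ^ (2 * a))%N.
  apply/eqP; rewrite -(eqn_pmul2l (prime_gt0 q_pr)).
  by rewrite -{1}(card_center_extraspecial qE esE) Lagrange ?center_sub // oE expnD.
apply: Rle_trans (expn_le_aut_bound q_gt2 a1); apply/le_INR/leP.
rewrite -bin2_double_pred; exact: (card_Aut_extraspecial qE esE iZ).
Qed.
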